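(* Let $M:[0,\infty)\to\mathbb{R}$ be continuous and satisfy condition (M3) for some $\gamma>0$ (see context), and let $T\ge 0$. Define functions on $[T,\infty)$ by $q_1(t):=M(t)$, $Q_k(t):=-\int_t^\infty q_k(s)\,ds$ for $k\ge1$, and $q_k(t):=\sum_{j=1}^{k-1}Q_j(t)Q_{k-j}(t)$ for $k\ge 2$, and set $\phi(t):=-\int_t^\infty Q_2(s)\,ds$. Then $Q_2(t)\le 0$ for $t\ge T$, and for every integer $k\ge 2$ and every $t\ge T$, $$|Q_k(t)|\le 4^{k-1}\big(-Q_2(t)\big)\,\phi(t)^{\frac{k-2}{2}}.$$
   Context: Condition (M3) (with $\gamma>0$): $\big|\int_t^\infty M(s)\,ds\big|\lesssim(1+t)^{-\gamma}$, $\int_t^\infty\big(\int_s^\infty M(\sigma)\,d\sigma\big)^2ds\lesssim(1+t)^{-\gamma}$ for $t\ge 0$, and $\int_0^\infty\int_t^\infty\big(\int_s^\infty M(\sigma)\,d\sigma\big)^2\,ds\,dt<\infty$; here $f\lesssim g$ means $f\le Cg$ with $C$ independent of $t$. *)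

From Stdlib Require Import Reals Lra List.
From Coquelicot Require Import Coquelicot.
Import ListNotations.
Open Scope R_scope.

Definition iint (f : R -> R) (t : R) : R :=
  real (Lim (fun x => RInt f t x) p_infty).

Definition has_iint (f : R -> R) (t : R) : Prop :=
  ex_finite_lim (fun x => RInt f t x) p_infty.

(* Given the list L = [Q_1; ...; Q_m] (m = length L), the next density
   q_{m+1}: q_1 = M, and for k = m+1 >= 2,
   q_k(t) = sum_{j=1}^{k-1} Q_j(t) Q_{k-j}(t)
   (index i = j-1 ranges over 0..m-1, and Q_{k-j} = nth (m-1-i) L). *)
Definition qnext (M : R -> R) (L : list (R -> R)) : R -> R :=
  match L with
  | [] => M
  | _ => fun t => sum_f_R0
           (fun i => nth i L (fun _ => 0) t * nth (length L - 1 - i) L (fun _ => 0) t)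
           (length L - 1)
  end.

(* Qlist M n = [Q_1; ...; Q_n], with Q_k(t) = - \int_t^\infty q_k(s) ds. *)
Fixpoint Qlist (M : R -> R) (n : nat) : list (R -> R) :=
  match n with
  | O => []
  | S m => let L := Qlist M m in L ++ [fun t => - iint (qnext M L) t]
  end.

Definition Qk (M : R -> R) (k : nat) : R -> R :=
  nth (k - 1) (Qlist M k) (fun _ => 0).

Definition qk (M : R -> R) (k : nat) : R -> R := qnext M (Qlist M (k - 1)).

Definition phi (M : R -> R) (t : R) : R := - iint (Qk M 2) t.

(* Write A(t) = int_t^oo Q_1^2, so that Q_2 = -A and phi = int_t^oo A, hence phi' = -A <= 0.
   We show |Q_k| <= 4^(k-1) A phi^((k-2)/2) by strong induction on k.  By the induction
   hypothesis, |q_k| = |2 Q_1 Q_(k-1) + sum_(j=2)^(k-2) Q_j Q_(k-j)| is at most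
   4^(k-2) (2 |Q_1| A phi^((k-3)/2) + (k-3) A^2 phi^((k-4)/2)).  Since
   int_t^oo A phi^(m/2) = 2/(m+2) phi(t)^((m+2)/2) and A is nonincreasing, the second term
   integrates to at most 2 (k-3)/(k-2) A(t) phi(t)^((k-2)/2), and Cauchy-Schwarz with
   int_t^oo Q_1^2 = A(t) bounds the integral of the first by 2 A(t) phi(t)^((k-2)/2). *)

From Stdlib Require Import Reals Lra Lia List Classical FunctionalExtensionality.
From Coquelicot Require Import Coquelicot.
Open Scope R_scope.

Lemma RInt_scalR (f : R -> R) a b c :
  ex_RInt f a b -> RInt (fun x => c * f x) a b = c * RInt f a b.
Proof. exact (RInt_scal (V := R_CompleteNormedModule) f a b c). Qed.

Lemma RInt_plusR (f g : R -> R) a b : ex_RInt f a b -> ex_RInt g a b ->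
  RInt (fun x => f x + g x) a b = RInt f a b + RInt g a b.
Proof. exact (RInt_plus (V := R_CompleteNormedModule) f g a b). Qed.

Lemma RInt_minusR (f g : R -> R) a b : ex_RInt f a b -> ex_RInt g a b ->
  RInt (fun x => f x - g x) a b = RInt f a b - RInt g a b.
Proof. exact (RInt_minus (V := R_CompleteNormedModule) f g a b). Qed.

Lemma RInt_ChaslesR (f : R -> R) a b c : ex_RInt f a b -> ex_RInt f b c ->
  RInt f a b + RInt f b c = RInt f a c.
Proof. exact (RInt_Chasles (V := R_CompleteNormedModule) f a b c). Qed.

Lemma continuous_pow (f : R -> R) n x :
  continuous f x -> continuous (fun y => f y ^ n) x.
Proof.
  intro Hf; induction n as [|n IH]; simpl.
  - apply continuous_const.
  - exact (continuous_mult f (fun y => f y ^ n) x Hf IH).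
Qed.

Lemma continuous_Rmax0 y : continuous (Rmax 0) y.
Proof.
  apply continuous_ext with (f := fun z => (z + Rabs z) * / 2).
  { intro z; unfold Rmax, Rabs; destruct (Rle_dec 0 z), (Rcase_abs z); lra. }
  apply (continuous_mult (fun z => z + Rabs z) (fun _ => / 2)).
  - apply (continuous_plus (fun z => z) Rabs); [apply continuous_id | apply continuous_Rabs].
  - apply continuous_const.
Qed.

Definition clamp0 (f : R -> R) (y : R) : R := f (Rmax 0 y).

Definition cont_nonneg (f : R -> R) : Prop := forall y, continuous (clamp0 f) y.

Lemma cont_nonneg_of_within (f : R -> R) :
  (forall t, 0 <= t -> filterlim f (within (fun s => 0 <= s) (locally t)) (locally (f t))) ->
  cont_nonneg f.
Proof.
  intros Hf y.
  apply (filterlim_comp _ _ _ (Rmax 0) f _ (within (fun s => 0 <= s) (locally (Rmax 0 y)))).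
  - intros P HP. change (locally y (fun z => P (Rmax 0 z))).
    apply (filter_imp (fun z => 0 <= Rmax 0 z -> P (Rmax 0 z))).
    { intros z Hz. apply Hz, Rmax_l. }
    exact (continuous_Rmax0 y _ HP).
  - apply Hf, Rmax_l.
Qed.

Create HintDb cont_nonneg.

Section ContNonneg.
Variables f g : R -> R.
Hypotheses (Hf : cont_nonneg f) (Hg : cont_nonneg g).

Lemma cont_nonneg_const c : cont_nonneg (fun _ => c).
Proof. intros y. apply continuous_const. Qed.
Lemma cont_nonneg_plus : cont_nonneg (fun t => f t + g t).
Proof. intros y. exact (continuous_plus (clamp0 f) (clamp0 g) y (Hf y) (Hg y)). Qed.
Lemma cont_nonneg_mult : cont_nonneg (fun t => f t * g t).
Proof. intros y. exact (continuous_mult (clamp0 f) (clamp0 g) y (Hf y) (Hg y)). Qed.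
Lemma cont_nonneg_opp : cont_nonneg (fun t => - f t).
Proof. intros y. exact (continuous_opp (clamp0 f) y (Hf y)). Qed.
Lemma cont_nonneg_abs : cont_nonneg (fun t => Rabs (f t)).
Proof. intros y. exact (continuous_Rabs_comp (clamp0 f) y (Hf y)). Qed.
Lemma cont_nonneg_sqrt : cont_nonneg (fun t => sqrt (f t)).
Proof. intros y. exact (continuous_comp (clamp0 f) sqrt y (Hf y) (continuous_sqrt _)). Qed.
Lemma cont_nonneg_pow n : cont_nonneg (fun t => f t ^ n).
Proof. intros y. exact (continuous_pow (clamp0 f) n y (Hf y)). Qed.

Lemma ex_RInt_cont_nonneg a b : 0 <= a -> 0 <= b -> ex_RInt f a b.
Proof.
  intros Ha Hb. apply ex_RInt_ext with (clamp0 f).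
  - intros x [Hx _]. unfold clamp0. rewrite Rmax_right; auto.
    assert (0 <= Rmin a b) by (apply Rmin_glb; auto). lra.
  - apply (ex_RInt_continuous (V := R_CompleteNormedModule)). intros; apply Hf.
Qed.
End ContNonneg.

Lemma cont_nonneg_ext (f g : R -> R) :
  (forall t, 0 <= t -> f t = g t) -> cont_nonneg f -> cont_nonneg g.
Proof.
  intros E Hf y. apply continuous_ext with (clamp0 f); [|apply Hf].
  intro z. apply E, Rmax_l.
Qed.

#[global] Hint Resolve cont_nonneg_const cont_nonneg_plus cont_nonneg_mult cont_nonneg_opp
  cont_nonneg_abs cont_nonneg_sqrt cont_nonneg_pow : cont_nonneg.

Lemma cont_nonneg_sum (F : nat -> R -> R) n :
  (forall i, (i <= n)%nat -> cont_nonneg (F i)) ->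
  cont_nonneg (fun t => sum_f_R0 (fun i => F i t) n).
Proof.
  induction n as [|n IH]; intro H; simpl.
  - apply H; lia.
  - apply cont_nonneg_plus; [apply IH; intros; apply H|apply H]; lia.
Qed.

Lemma iint_eq f t l : is_lim (fun x => RInt f t x) p_infty (Finite l) -> iint f t = l.
Proof. intro H. unfold iint. rewrite (is_lim_unique _ _ _ H). reflexivity. Qed.

Lemma is_lim_iint f t :
  has_iint f t -> is_lim (fun x => RInt f t x) p_infty (Finite (iint f t)).
Proof. intros [l Hl]. rewrite (iint_eq _ _ _ Hl). exact Hl. Qed.

Lemma is_lim_p_infty_le (F G : R -> R) lf lg t :
  is_lim F p_infty (Finite lf) -> is_lim G p_infty (Finite lg) ->
  (forall x, t <= x -> F x <= G x) -> lf <= lg.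
Proof.
  intros HF HG H. apply (is_lim_le_loc F G p_infty lf lg); auto.
  exists t. intros; apply H; lra.
Qed.

Lemma is_lim_p_infty_incr_bounded (F : R -> R) t B :
  (forall x y, t <= x -> x <= y -> F x <= F y) -> (forall x, t <= x -> F x <= B) ->
  exists l, is_lim F p_infty (Finite l).
Proof.
  intros Hm Hb.
  set (E := fun r => exists x, t <= x /\ r = F x).
  destruct (completeness E) as [L [HL1 HL2]].
  { exists B. intros r [x [Hx ->]]. auto. }
  { exists (F t), t. split; auto; lra. }
  exists L. apply is_lim_spec. intro eps.
  assert (exists x, t <= x /\ L - eps < F x) as [x0 [Hx0 Hx0']].
  { apply NNPP. intro N.
    assert (is_upper_bound E (L - eps)).
    { intros r [x [Hx ->]]. apply Rnot_lt_le. intro h. apply N. exists x; auto. }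
    specialize (HL2 _ H). destruct eps; simpl in *; lra. }
  exists x0. intros y Hy.
  assert (F y <= L) by (apply HL1; exists y; split; auto; lra).
  assert (F x0 <= F y) by (apply Hm; lra).
  simpl. rewrite Rabs_left1; lra.
Qed.

Lemma RInt_incr_upper (h : R -> R) t x y :
  cont_nonneg h -> (forall u, 0 <= u -> 0 <= h u) -> 0 <= t -> t <= x -> x <= y ->
  RInt h t x <= RInt h t y.
Proof.
  intros Hh Hp Ht Hx Hy.
  rewrite <- (RInt_ChaslesR h t x y) by (apply ex_RInt_cont_nonneg; auto; lra).
  assert (0 <= RInt h x y); [|lra].
  apply RInt_ge_0; auto.
  - apply ex_RInt_cont_nonneg; auto; lra.
  - intros; apply Hp; lra.
Qed.

Lemma ex_lim_RInt_nonneg_bounded (h : R -> R) t B :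
  cont_nonneg h -> (forall u, 0 <= u -> 0 <= h u) -> 0 <= t ->
  (forall x, t <= x -> RInt h t x <= B) ->
  exists l, is_lim (fun x => RInt h t x) p_infty (Finite l).
Proof.
  intros Hh Hp Ht HB. apply (is_lim_p_infty_incr_bounded _ t B); auto.
  intros; apply RInt_incr_upper; auto.
Qed.

(* Absolute convergence: f is the difference of the nonnegative functions |f| + f and |f|. *)
Lemma has_iint_abs_le f t B :
  cont_nonneg f -> 0 <= t -> (forall x, t <= x -> RInt (fun u => Rabs (f u)) t x <= B) ->
  has_iint f t /\ Rabs (iint f t) <= B.
Proof.
  intros Hf Ht HB.
  destruct (ex_lim_RInt_nonneg_bounded (fun u => Rabs (f u)) t B) as [l1 Hl1];
    auto with cont_nonneg.
  { intros; apply Rabs_pos. }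
  destruct (ex_lim_RInt_nonneg_bounded (fun u => Rabs (f u) + f u) t (2 * B)) as [l2 Hl2];
    auto with cont_nonneg.
  { intros u _. pose proof (Rabs_maj2 (f u)). lra. }
  { intros x Hx. specialize (HB x Hx).
    apply Rle_trans with (RInt (fun u => 2 * Rabs (f u)) t x).
    - apply RInt_le; try lra; try (apply ex_RInt_cont_nonneg; auto 20 with cont_nonneg; lra).
      intros u _. pose proof (Rle_abs (f u)). lra.
    - rewrite RInt_scalR by (apply ex_RInt_cont_nonneg; auto with cont_nonneg; lra). lra. }
  assert (Hlim : is_lim (fun x => RInt f t x) p_infty (Finite (l2 - l1))).
  { apply is_lim_ext_loc
      with (fun x => RInt (fun u => Rabs (f u) + f u) t x - RInt (fun u => Rabs (f u)) t x).
    { exists t. intros x Hx.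
      rewrite <- RInt_minusR by (apply ex_RInt_cont_nonneg; auto with cont_nonneg; lra).
      apply RInt_ext. intros u _. change (Rabs (f u) + f u - Rabs (f u) = f u). ring. }
    apply is_lim_minus'; auto. }
  split; [exists (l2 - l1); exact Hlim|].
  rewrite (iint_eq _ _ _ Hlim). apply Rabs_le. split.
  - apply (is_lim_p_infty_le (fun _ => - B) (fun x => RInt f t x) _ _ t); auto using is_lim_const.
    intros x Hx. specialize (HB x Hx).
    pose proof (abs_RInt_le f t x Hx (ex_RInt_cont_nonneg f Hf t x Ht ltac:(lra))).
    pose proof (Rabs_maj2 (RInt f t x)). lra.
  - apply (is_lim_p_infty_le (fun x => RInt f t x) (fun _ => B) _ _ t); auto using is_lim_const.
    intros x Hx. specialize (HB x Hx).
    pose proof (abs_RInt_le f t x Hx (ex_RInt_cont_nonneg f Hf t x Ht ltac:(lra))).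
    pose proof (Rle_abs (RInt f t x)). lra.
Qed.

Lemma iint_tail f t u : cont_nonneg f -> 0 <= t -> 0 <= u -> has_iint f u ->
  has_iint f t /\ iint f t = iint f u + RInt f t u.
Proof.
  intros Hf Ht Hu Hi.
  assert (H : is_lim (fun x => RInt f t x) p_infty (Finite (RInt f t u + iint f u))).
  { apply is_lim_ext_loc with (fun x => RInt f t u + RInt f u x).
    - exists 0. intros x Hx. apply RInt_ChaslesR; apply ex_RInt_cont_nonneg; auto; lra.
    - apply is_lim_plus'; [apply is_lim_const | apply is_lim_iint; auto]. }
  split; [eexists; eauto|]. rewrite (iint_eq _ _ _ H). ring.
Qed.

Lemma iint_from0 f t : cont_nonneg f -> 0 <= t -> has_iint f 0 ->
  iint f t = iint f 0 - RInt (clamp0 f) 0 t.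
Proof.
  intros Hf Ht Hi. rewrite (proj2 (iint_tail f t 0 Hf Ht (Rle_refl 0) Hi)).
  rewrite <- (opp_RInt_swap (V := R_CompleteNormedModule) f 0 t)
    by (apply ex_RInt_cont_nonneg; auto; lra).
  rewrite (RInt_ext (clamp0 f) f).
  - change (iint f 0 + - RInt f 0 t = iint f 0 - RInt f 0 t). ring.
  - intros x [Hx _]. unfold clamp0. rewrite Rmin_left in Hx by lra. apply f_equal, Rmax_right. lra.
Qed.

Lemma is_derive_RInt_clamp0 f z :
  cont_nonneg f -> is_derive (fun b => RInt (clamp0 f) 0 b) z (clamp0 f z).
Proof.
  intros Hf. apply (is_derive_RInt (V := R_NormedModule) _ _ 0); [|apply Hf].
  apply filter_forall. intro b. apply (RInt_correct (V := R_CompleteNormedModule)).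
  apply (ex_RInt_continuous (V := R_CompleteNormedModule)). intros; apply Hf.
Qed.

Lemma cont_nonneg_iint f : cont_nonneg f -> has_iint f 0 -> cont_nonneg (iint f).
Proof.
  intros Hf Hi. apply cont_nonneg_ext with (fun t => iint f 0 - RInt (clamp0 f) 0 t).
  { intros t Ht. symmetry. apply iint_from0; auto. }
  intro y. apply (continuous_minus (fun _ => iint f 0) (fun y => RInt (clamp0 f) 0 (Rmax 0 y))).
  - apply continuous_const.
  - apply (continuous_comp (Rmax 0) (fun b => RInt (clamp0 f) 0 b)); [apply continuous_Rmax0|].
    apply (ex_derive_continuous (V := R_NormedModule)). eexists. apply is_derive_RInt_clamp0; auto.
Qed.

Lemma iint_ge0 f t : cont_nonneg f -> 0 <= t -> has_iint f t ->
  (forall u, t <= u -> 0 <= f u) -> 0 <= iint f t.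
Proof.
  intros Hf Ht Hi Hp.
  apply (is_lim_p_infty_le (fun _ => 0) (fun x => RInt f t x) _ _ t);
    auto using is_lim_const, is_lim_iint.
  intros x Hx. apply RInt_ge_0; auto.
  - apply ex_RInt_cont_nonneg; auto; lra.
  - intros; apply Hp; lra.
Qed.

Lemma iint_opp f t : cont_nonneg f -> 0 <= t -> has_iint f t ->
  iint (fun s => - f s) t = - iint f t.
Proof.
  intros Hf Ht Hi. apply iint_eq, is_lim_ext_loc with (fun x => - RInt f t x).
  - exists 0. intros x Hx. rewrite (RInt_ext (fun s => - f s) (fun s => -1 * f s) t x).
    + rewrite RInt_scalR; [ring | apply ex_RInt_cont_nonneg; auto; lra].
    + intros u _. change (- f u = -1 * f u). ring.
  - apply (is_lim_opp _ p_infty (Finite (iint f t))), is_lim_iint; auto.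
Qed.

Lemma le_mult_sqrt_pow_of_le_plus X c y n :
  (forall e, 0 < e -> X <= c * sqrt (y + e) ^ n) -> X <= c * sqrt y ^ n.
Proof.
  intro H. set (h := fun e => c * sqrt (y + e) ^ n).
  assert (Hc : continuous h 0).
  { apply (continuous_mult (fun _ => c) (fun e => sqrt (y + e) ^ n)); [apply continuous_const|].
    apply (continuous_pow (fun e => sqrt (y + e))).
    apply (continuous_comp (fun e => y + e) sqrt); [|apply continuous_sqrt].
    apply (continuous_plus (fun _ => y) (fun e => e));
      [apply continuous_const | apply continuous_id]. }
  apply Rnot_lt_le. intro Hlt.
  assert (Hpos : 0 < X - h 0) by (unfold h; rewrite Rplus_0_r; lra).
  apply filterlim_locally with (eps := mkposreal _ Hpos) in Hc. destruct Hc as [d Hd].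
  assert (Hb : ball 0 d (d / 2)).
  { change (Rabs (d / 2 - 0) < d). destruct d as [d dp]; simpl. rewrite Rabs_pos_eq; lra. }
  specialize (Hd _ Hb). change (Rabs (h (d / 2) - h 0) < X - h 0) in Hd.
  assert (X <= h (d / 2)) by (apply H; destruct d; simpl; lra).
  pose proof (Rle_abs (h (d / 2) - h 0)). lra.
Qed.

Lemma le_sqrt_mult_of_amgm X F G : 0 <= F -> 0 <= G ->
  (forall l, 0 < l -> X <= (l * F + G / l) / 2) -> X <= sqrt (F * G).
Proof.
  intros HF HG H. rewrite sqrt_mult by auto.
  destruct (Req_dec F 0) as [F0|FP]; [|destruct (Req_dec G 0) as [G0|GP]].
  - subst F. rewrite sqrt_0, Rmult_0_l. apply Rnot_lt_le. intro HX.
    specialize (H ((G + 1) / X) ltac:(apply Rdiv_lt_0_compat; lra)).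
    replace (((G + 1) / X * 0 + G / ((G + 1) / X)) / 2) with (X / 2 - X / (2 * (G + 1))) in H
      by (field; lra).
    assert (0 < X / (2 * (G + 1))) by (apply Rdiv_lt_0_compat; lra). lra.
  - subst G. rewrite sqrt_0, Rmult_0_r. apply Rnot_lt_le. intro HX.
    specialize (H (X / F) ltac:(apply Rdiv_lt_0_compat; lra)).
    replace ((X / F * F + 0 / (X / F)) / 2) with (X / 2) in H by (field; lra). lra.
  - assert (EF : F = sqrt F * sqrt F) by (rewrite sqrt_sqrt; auto).
    assert (EG : G = sqrt G * sqrt G) by (rewrite sqrt_sqrt; auto).
    assert (sF : 0 < sqrt F) by (apply sqrt_lt_R0; lra).
    assert (sG : 0 < sqrt G) by (apply sqrt_lt_R0; lra).
    set (a := sqrt F) in *. set (b := sqrt G) in *.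
    specialize (H (b / a) ltac:(apply Rdiv_lt_0_compat; lra)).
    rewrite EF, EG in H. replace ((b / a * (a * a) + b * b / (b / a)) / 2) with (a * b) in H
      by (field; lra). exact H.
Qed.

Lemma RInt_mult_le_sqrt (f g : R -> R) a b F G : a <= b ->
  ex_RInt (fun x => f x ^ 2) a b -> ex_RInt (fun x => g x ^ 2) a b ->
  ex_RInt (fun x => f x * g x) a b ->
  RInt (fun x => f x ^ 2) a b <= F -> RInt (fun x => g x ^ 2) a b <= G ->
  RInt (fun x => f x * g x) a b <= sqrt (F * G).
Proof.
  intros Hab Hf Hg Hfg HF HG.
  assert (HF0 : 0 <= F).
  { eapply Rle_trans; [|exact HF]. apply RInt_ge_0; auto. intros; apply pow2_ge_0. }
  assert (HG0 : 0 <= G).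
  { eapply Rle_trans; [|exact HG]. apply RInt_ge_0; auto. intros; apply pow2_ge_0. }
  apply le_sqrt_mult_of_amgm; auto. intros l Hl.
  assert (Hl2 : 0 < / (2 * l)) by (apply Rinv_0_lt_compat; lra).
  apply Rle_trans with (RInt (fun x => l / 2 * f x ^ 2 + / (2 * l) * g x ^ 2) a b).
  - apply RInt_le; auto.
    + apply (ex_RInt_plus (V := R_CompleteNormedModule) (fun x => l / 2 * f x ^ 2)
        (fun x => / (2 * l) * g x ^ 2)); apply (ex_RInt_scal (V := R_CompleteNormedModule)); auto.
    + intros x _. assert (0 <= (l * f x - g x) ^ 2) by apply pow2_ge_0.
      apply Rmult_le_reg_l with (2 * l); [lra|].
      replace (2 * l * (l / 2 * f x ^ 2 + / (2 * l) * g x ^ 2)) with (l * l * f x ^ 2 + g x ^ 2)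
        by (field; lra). nra.
  - rewrite RInt_plusR, !RInt_scalR; auto;
      try (apply (ex_RInt_scal (V := R_CompleteNormedModule)); auto).
    replace ((l * F + G / l) / 2) with (l / 2 * F + / (2 * l) * G) by (field; lra).
    apply Rplus_le_compat; apply Rmult_le_compat_l; lra.
Qed.

Lemma RInt_mult_sqrt_pow (P a : R -> R) m t x : t <= x ->
  (forall u, t <= u <= x -> is_derive P u (- a u) /\ continuous a u /\ 0 < P u) ->
  RInt (fun u => a u * sqrt (P u) ^ m) t x
  = 2 / (INR m + 2) * (sqrt (P t) ^ (m + 2) - sqrt (P x) ^ (m + 2)).
Proof.
  intros Htx H.
  assert (Hm : 0 < INR m + 2) by (pose proof (pos_INR m); lra).
  set (G := fun u => - (2 / (INR m + 2)) * sqrt (P u) ^ (m + 2)).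
  assert (HI : is_RInt (fun u => a u * sqrt (P u) ^ m) t x (minus (G x) (G t))).
  { apply (is_RInt_derive (V := R_CompleteNormedModule));
      rewrite Rmin_left, Rmax_right by lra; intros u Hu; destruct (H u Hu) as (HP & Ha & Hpos).
    - replace (a u * sqrt (P u) ^ m) with (scal (- (2 / (INR m + 2)))
        (INR (m + 2) * (- a u / (2 * sqrt (P u))) * sqrt (P u) ^ Nat.pred (m + 2))).
      + apply (is_derive_scal (fun u => sqrt (P u) ^ (m + 2))).
        apply (is_derive_pow (fun u => sqrt (P u))), (is_derive_sqrt P); auto.
      + assert (0 < sqrt (P u)) by (apply sqrt_lt_R0; auto).
        replace (Nat.pred (m + 2)) with (S m) by lia. rewrite plus_INR.
        change (scal ?k ?v) with (k * v). simpl. field. lra.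
    - apply (continuous_mult a (fun u => sqrt (P u) ^ m)); auto.
      apply (continuous_pow (fun u => sqrt (P u))), (continuous_comp P sqrt);
        [|apply continuous_sqrt].
      apply (ex_derive_continuous (V := R_NormedModule)). eexists; exact HP. }
  rewrite (is_RInt_unique _ _ _ _ HI). unfold G, minus, plus, opp. simpl. ring.
Qed.

Lemma Rabs_sum_f_R0_le (h : nat -> R) p X Y :
  Rabs (h 0%nat) <= X -> Rabs (h (S p)) <= X -> (forall i, (1 <= i <= p)%nat -> Rabs (h i) <= Y) ->
  Rabs (sum_f_R0 h (S p)) <= 2 * X + INR p * Y.
Proof.
  intros H0 HS Hm. eapply Rle_trans; [apply sum_f_R0_triangle|].
  change (sum_f_R0 (fun i => Rabs (h i)) p + Rabs (h (S p)) <= 2 * X + INR p * Y).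
  destruct p as [|q]; [simpl; lra|].
  rewrite decomp_sum by lia. simpl Init.Nat.pred.
  assert (sum_f_R0 (fun i => Rabs (h (S i))) q <= sum_f_R0 (fun _ => Y) q)
    by (apply sum_Rle; intros; apply Hm; lia).
  rewrite sum_cte in H. lra.
Qed.

Lemma Qlist_length M n : length (Qlist M n) = n.
Proof. induction n as [|n IH]; simpl; auto. rewrite length_app, IH; simpl; lia. Qed.

Lemma nth_Qlist_add M n m i d : (i < n)%nat -> nth i (Qlist M (n + m)) d = nth i (Qlist M n) d.
Proof.
  intro H. induction m as [|m IH]; [rewrite Nat.add_0_r; auto|].
  rewrite Nat.add_succ_r. simpl. rewrite app_nth1; auto. rewrite Qlist_length; lia.
Qed.

Lemma nth_Qlist M j n : (1 <= j <= n)%nat -> nth (j - 1) (Qlist M n) (fun _ => 0) = Qk M j.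
Proof. intro H. unfold Qk. replace n with (j + (n - j))%nat by lia. apply nth_Qlist_add. lia. Qed.

Lemma Qk_succ M n : Qk M (S n) = fun t => - iint (qk M (S n)) t.
Proof.
  unfold Qk, qk. simpl. rewrite Nat.sub_0_r, app_nth2; rewrite Qlist_length; [|lia].
  rewrite Nat.sub_diag. reflexivity.
Qed.

Lemma Qk_1 M : Qk M 1 = fun t => - iint M t.
Proof. reflexivity. Qed.

Lemma qk_succ_succ M p t :
  qk M (S (S p)) t = sum_f_R0 (fun i => Qk M (S i) t * Qk M (S (p - i)) t) p.
Proof.
  unfold qk. replace (S (S p) - 1)%nat with (S p) by lia.
  destruct (Qlist M (S p)) as [|Q L] eqn:EL.
  { apply (f_equal (@length _)) in EL. rewrite Qlist_length in EL. discriminate. }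
  change (qnext M (Q :: L) t) with
    (sum_f_R0 (fun i => nth i (Q :: L) (fun _ => 0) t
       * nth (length (Q :: L) - 1 - i) (Q :: L) (fun _ => 0) t) (length (Q :: L) - 1)).
  rewrite <- EL, Qlist_length. replace (S p - 1)%nat with p by lia.
  apply sum_eq. intros i Hi.
  rewrite <- (nth_Qlist M (S i) (S p)), <- (nth_Qlist M (S (p - i)) (S p)) by lia.
  replace (S i - 1)%nat with i by lia. replace (S (p - i) - 1)%nat with (p - i)%nat by lia.
  replace (S p - 1 - i)%nat with (p - i)%nat by lia. reflexivity.
Qed.

Definition A (M : R -> R) (t : R) : R := iint (fun s => iint M s ^ 2) t.

Lemma Qk_2 M : Qk M 2 = fun t => - A M t.
Proof.
  rewrite Qk_succ. apply functional_extensionality. intro t. unfold A. do 2 f_equal.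
  apply functional_extensionality. intro s. rewrite qk_succ_succ. simpl. rewrite Qk_1. ring.
Qed.

Definition Qk_bounded (M : R -> R) (k : nat) : Prop :=
  cont_nonneg (Qk M k) /\
  forall t, 0 <= t -> Rabs (Qk M k t) <= 4 ^ (k - 1) * A M t * sqrt (phi M t) ^ (k - 2).

Section Tail.
Variable M : R -> R.
Hypothesis M_cont : cont_nonneg M.
Hypothesis M_iint : forall t, 0 <= t -> has_iint M t.
Hypothesis sq_iint : forall t, 0 <= t -> has_iint (fun s => iint M s ^ 2) t.
Hypothesis A_iint0 : has_iint (A M) 0.

Lemma cont_iint_M : cont_nonneg (iint M).
Proof. apply cont_nonneg_iint; auto. apply M_iint; lra. Qed.

Lemma cont_A : cont_nonneg (A M).
Proof. apply cont_nonneg_iint; [auto using cont_iint_M with cont_nonneg | apply sq_iint; lra]. Qed.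

Lemma A_tail t u : 0 <= t -> 0 <= u -> A M t = A M u + RInt (fun s => iint M s ^ 2) t u.
Proof. intros. apply iint_tail; auto using cont_iint_M with cont_nonneg. Qed.

Lemma A_ge0 t : 0 <= t -> 0 <= A M t.
Proof. intro. apply iint_ge0; auto using cont_iint_M with cont_nonneg. intros; apply pow2_ge_0. Qed.

Lemma RInt_sq_le_A t x : 0 <= t -> t <= x -> RInt (fun s => iint M s ^ 2) t x <= A M t.
Proof. intros. rewrite (A_tail t x) by lra. pose proof (A_ge0 x). lra. Qed.

Lemma A_decr t u : 0 <= t -> t <= u -> A M u <= A M t.
Proof.
  intros. rewrite (A_tail t u) by lra.
  assert (0 <= RInt (fun s => iint M s ^ 2) t u); [|lra].
  apply RInt_ge_0; auto. apply ex_RInt_cont_nonneg; auto using cont_iint_M with cont_nonneg; lra.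
  intros; apply pow2_ge_0.
Qed.

Lemma has_iint_A t : 0 <= t -> has_iint (A M) t.
Proof. intro. apply (iint_tail (A M) t 0); auto using cont_A; lra. Qed.

Lemma phi_eq t : 0 <= t -> phi M t = iint (A M) t.
Proof.
  intro. unfold phi. rewrite Qk_2, iint_opp; auto using cont_A, has_iint_A. ring.
Qed.

Lemma phi_ge0 t : 0 <= t -> 0 <= phi M t.
Proof.
  intro. rewrite phi_eq by auto. apply iint_ge0; auto using cont_A, has_iint_A.
  intros; apply A_ge0; lra.
Qed.

Lemma phi_from0 t : 0 <= t -> phi M t = iint (A M) 0 - RInt (clamp0 (A M)) 0 t.
Proof. intro. rewrite phi_eq by auto. apply iint_from0; auto using cont_A. Qed.

Lemma cont_phi : cont_nonneg (phi M).
Proof.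
  apply cont_nonneg_ext with (iint (A M)); [intros; symmetry; apply phi_eq; auto|].
  apply cont_nonneg_iint; auto using cont_A.
Qed.

#[local] Hint Resolve cont_iint_M cont_A cont_phi : cont_nonneg.

(* As [phi' = -A], this is the integrated form of
   [(sqrt phi ^ (m + 2))' = -(m + 2)/2 A sqrt phi ^ m]; [phi] is shifted by [e > 0]
   to stay away from the singularity of [sqrt] at 0. *)
Lemma RInt_A_sqrt_phi_pow_le m t x : 0 <= t -> t <= x ->
  RInt (fun u => A M u * sqrt (phi M u) ^ m) t x <= 2 / (INR m + 2) * sqrt (phi M t) ^ (m + 2).
Proof.
  intros Ht Hx. apply le_mult_sqrt_pow_of_le_plus. intros e He.
  set (P := fun u => iint (A M) 0 - RInt (clamp0 (A M)) 0 u + e).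
  assert (HP : forall u, 0 <= u -> P u = phi M u + e)
    by (intros; unfold P; rewrite phi_from0; auto).
  assert (HdP : forall u, is_derive P u (- clamp0 (A M) u)).
  { intro u.
    pose proof (is_derive_minus (fun _ => iint (A M) 0 + e) (fun b => RInt (clamp0 (A M)) 0 b)
      u _ _ (is_derive_const _ u) (is_derive_RInt_clamp0 (A M) u cont_A)) as D.
    replace (- clamp0 (A M) u) with (minus zero (clamp0 (A M) u))
      by (unfold minus, plus, opp, zero; simpl; ring).
    refine (is_derive_ext _ P u _ _ D).
    intro b. unfold P, minus, plus, opp. simpl. ring. }
  assert (Hm : 0 < 2 / (INR m + 2)) by (apply Rdiv_lt_0_compat; pose proof (pos_INR m); lra).
  apply Rle_trans with (RInt (fun u => A M u * sqrt (phi M u + e) ^ m) t x).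
  - apply RInt_le; auto; try (apply ex_RInt_cont_nonneg; auto 20 with cont_nonneg; lra).
    intros u Hu. apply Rmult_le_compat_l; [apply A_ge0; lra|].
    apply pow_incr. split; [apply sqrt_pos|]. apply sqrt_le_1_alt. lra.
  - rewrite (RInt_ext _ (fun u => clamp0 (A M) u * sqrt (P u) ^ m)).
    2:{ intros u Hu. rewrite Rmin_left in Hu by lra. unfold clamp0.
        rewrite Rmax_right, HP by lra. reflexivity. }
    rewrite (RInt_mult_sqrt_pow P (clamp0 (A M))); auto.
    2:{ intros u Hu. split; [apply HdP|split; [apply cont_A|]].
        rewrite HP by lra. pose proof (phi_ge0 u ltac:(lra)). lra. }
    rewrite HP by lra. assert (0 <= sqrt (P x) ^ (m + 2)) by (apply pow_le, sqrt_pos).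
    apply Rmult_le_compat_l; lra.
Qed.

Lemma cont_Qk_1 : cont_nonneg (Qk M 1).
Proof. rewrite Qk_1. auto with cont_nonneg. Qed.

#[local] Hint Resolve cont_Qk_1 : cont_nonneg.

(* Cauchy-Schwarz against [int_t^x Q_1^2 <= A(t)]. *)
Lemma RInt_Qk_1_A_sqrt_phi_pow_le p t x : 0 <= t -> t <= x ->
  RInt (fun u => Rabs (Qk M 1 u) * (A M u * sqrt (phi M u) ^ p)) t x
  <= A M t * sqrt (phi M t) ^ S p.
Proof.
  intros Ht Hx.
  assert (HA : 0 <= A M t) by (apply A_ge0; auto).
  assert (Hs : 0 <= sqrt (phi M t) ^ S p) by (apply pow_le, sqrt_pos).
  rewrite <- (sqrt_pow2 (A M t * sqrt (phi M t) ^ S p)) by (apply Rmult_le_pos; auto).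
  replace ((A M t * sqrt (phi M t) ^ S p) ^ 2)
    with (A M t * (A M t * sqrt (phi M t) ^ (2 * p + 2)))
    by (rewrite Rpow_mult_distr, <- pow_mult;
        replace (S p * 2)%nat with (2 * p + 2)%nat by lia; ring).
  apply RInt_mult_le_sqrt; auto; try (apply ex_RInt_cont_nonneg; auto 20 with cont_nonneg; lra).
  - rewrite (RInt_ext _ (fun s => iint M s ^ 2)).
    + apply RInt_sq_le_A; auto.
    + intros u _. rewrite pow2_abs, Qk_1. simpl. ring.
  - apply Rle_trans with (RInt (fun u => A M t * (A M u * sqrt (phi M u) ^ (2 * p))) t x).
    + apply RInt_le; auto; try (apply ex_RInt_cont_nonneg; auto 20 with cont_nonneg; lra).
      intros u Hu. assert (0 <= A M u) by (apply A_ge0; lra).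
      assert (A M u <= A M t) by (apply A_decr; lra).
      rewrite Rpow_mult_distr, <- pow_mult, Nat.mul_comm.
      replace (A M u ^ 2 * sqrt (phi M u) ^ (2 * p))
        with (A M u * (A M u * sqrt (phi M u) ^ (2 * p))) by ring.
      apply Rmult_le_compat_r; auto. apply Rmult_le_pos; auto. apply pow_le, sqrt_pos.
    + rewrite RInt_scalR by (apply ex_RInt_cont_nonneg; auto 20 with cont_nonneg; lra).
      apply Rmult_le_compat_l; auto.
      eapply Rle_trans; [apply RInt_A_sqrt_phi_pow_le; auto|].
      rewrite <- (Rmult_1_l (sqrt (phi M t) ^ (2 * p + 2))) at 2.
      apply Rmult_le_compat_r; [apply pow_le, sqrt_pos|].
      pose proof (pos_INR (2 * p)). apply Rmult_le_reg_r with (INR (2 * p) + 2); [lra|].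
      unfold Rdiv. rewrite Rmult_assoc, Rinv_l by lra. lra.
Qed.

Lemma RInt_A2_sqrt_phi_pow_le q t x : 0 <= t -> t <= x ->
  RInt (fun u => A M u ^ 2 * sqrt (phi M u) ^ q) t x
  <= A M t * (2 / (INR q + 2) * sqrt (phi M t) ^ (q + 2)).
Proof.
  intros Ht Hx.
  apply Rle_trans with (RInt (fun u => A M t * (A M u * sqrt (phi M u) ^ q)) t x).
  - apply RInt_le; auto; try (apply ex_RInt_cont_nonneg; auto 20 with cont_nonneg; lra).
    intros u Hu.
    replace (A M u ^ 2 * sqrt (phi M u) ^ q) with (A M u * (A M u * sqrt (phi M u) ^ q)) by ring.
    apply Rmult_le_compat_r; [|apply A_decr; lra].
    apply Rmult_le_pos; [apply A_ge0; lra | apply pow_le, sqrt_pos].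
  - rewrite RInt_scalR by (apply ex_RInt_cont_nonneg; auto 20 with cont_nonneg; lra).
    apply Rmult_le_compat_l; [apply A_ge0|apply RInt_A_sqrt_phi_pow_le]; auto.
Qed.

Lemma Qk_bounded_2 : Qk_bounded M 2.
Proof.
  unfold Qk_bounded. rewrite Qk_2. split; [auto with cont_nonneg|].
  intros t Ht. pose proof (A_ge0 t Ht). rewrite Rabs_Ropp, Rabs_pos_eq by auto. simpl. lra.
Qed.

(* The induction hypothesis applied to each term of
   [q_(p+3) = 2 Q_1 Q_(p+2) + sum_(j=2)^(p+1) Q_j Q_(p+3-j)]. *)
Definition qk_majorant (p : nat) (u : R) : R :=
  4 ^ S p * (2 * (Rabs (Qk M 1 u) * (A M u * sqrt (phi M u) ^ p))
             + INR p * (A M u ^ 2 * sqrt (phi M u) ^ (p - 1))).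

Lemma Rabs_qk_le_majorant p :
  (forall j, (2 <= j <= S (S p))%nat -> Qk_bounded M j) ->
  forall u, 0 <= u -> Rabs (qk M (S (S (S p))) u) <= qk_majorant p u.
Proof.
  intros IH u Hu.
  assert (B : forall j, (2 <= j <= S (S p))%nat ->
            Rabs (Qk M j u) <= 4 ^ (j - 1) * A M u * sqrt (phi M u) ^ (j - 2))
    by (intros j Hj; apply (IH j Hj); auto).
  assert (Bp : Rabs (Qk M (S (S p)) u) <= 4 ^ S p * A M u * sqrt (phi M u) ^ p).
  { replace (S p) with (S (S p) - 1)%nat at 1 by lia. replace p with (S (S p) - 2)%nat at 3 by lia.
    apply B; lia. }
  assert (HQ1 : 0 <= Rabs (Qk M 1 u)) by apply Rabs_pos.
  set (X := Rabs (Qk M 1 u) * (A M u * sqrt (phi M u) ^ p)).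
  set (Y := A M u ^ 2 * sqrt (phi M u) ^ (p - 1)).
  replace (qk_majorant p u) with (2 * (4 ^ S p * X) + INR p * (4 ^ S p * Y))
    by (unfold qk_majorant, X, Y; ring).
  rewrite qk_succ_succ. apply Rabs_sum_f_R0_le.
  - rewrite Nat.sub_0_r, Rabs_mult.
    replace (4 ^ S p * X) with (Rabs (Qk M 1 u) * (4 ^ S p * A M u * sqrt (phi M u) ^ p))
      by (unfold X; ring).
    apply Rmult_le_compat_l; auto.
  - rewrite Nat.sub_diag, Rabs_mult.
    replace (4 ^ S p * X) with ((4 ^ S p * A M u * sqrt (phi M u) ^ p) * Rabs (Qk M 1 u))
      by (unfold X; ring).
    apply Rmult_le_compat_r; auto.
  - intros i Hi. unfold Y. rewrite Rabs_mult.
    eapply Rle_trans; [apply Rmult_le_compat; try apply Rabs_pos; apply B; lia|].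
    replace (S i - 1)%nat with i by lia. replace (S (S p - i) - 1)%nat with (S p - i)%nat by lia.
    replace (S i - 2)%nat with (i - 1)%nat by lia.
    replace (S (S p - i) - 2)%nat with (p - i)%nat by lia.
    replace (4 ^ S p) with (4 ^ i * 4 ^ (S p - i)) by (rewrite <- pow_add; f_equal; lia).
    replace (sqrt (phi M u) ^ (p - 1)) with (sqrt (phi M u) ^ (i - 1) * sqrt (phi M u) ^ (p - i))
      by (rewrite <- pow_add; f_equal; lia).
    right. ring.
Qed.

Lemma cont_qk_majorant p : cont_nonneg (qk_majorant p).
Proof. unfold qk_majorant. auto 20 with cont_nonneg. Qed.

Lemma RInt_qk_majorant_le p t x : 0 <= t -> t <= x ->
  RInt (qk_majorant p) t x <= 4 ^ S (S p) * A M t * sqrt (phi M t) ^ S p.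
Proof.
  intros Ht Hx.
  assert (HA : 0 <= A M t * sqrt (phi M t) ^ S p)
    by (apply Rmult_le_pos; [apply A_ge0; auto | apply pow_le, sqrt_pos]).
  assert (Hmid : INR p * RInt (fun u => A M u ^ 2 * sqrt (phi M u) ^ (p - 1)) t x
                 <= 2 * (A M t * sqrt (phi M t) ^ S p)).
  { destruct p as [|q]; [simpl; lra|].
    replace (S q - 1)%nat with q by lia.
    eapply Rle_trans.
    { apply Rmult_le_compat_l; [apply pos_INR | apply RInt_A2_sqrt_phi_pow_le; auto]. }
    replace (q + 2)%nat with (S (S q)) by lia. rewrite S_INR.
    assert (Hq : 0 <= INR q) by apply pos_INR.
    replace ((INR q + 1) * (A M t * (2 / (INR q + 2) * sqrt (phi M t) ^ S (S q))))
      with ((INR q + 1) / (INR q + 2) * (2 * (A M t * sqrt (phi M t) ^ S (S q)))) by (field; lra).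
    rewrite <- (Rmult_1_l (2 * _)) at 2. apply Rmult_le_compat_r; [lra|].
    apply Rmult_le_reg_r with (INR q + 2); [lra|].
    unfold Rdiv. rewrite Rmult_assoc, Rinv_l by lra. lra. }
  pose proof (RInt_Qk_1_A_sqrt_phi_pow_le p t x Ht Hx) as Hend.
  unfold qk_majorant.
  rewrite RInt_scalR, RInt_plusR, !RInt_scalR;
    try (apply ex_RInt_cont_nonneg; auto 20 with cont_nonneg; lra).
  replace (4 ^ S (S p) * A M t * sqrt (phi M t) ^ S p)
    with (4 ^ S p * (4 * (A M t * sqrt (phi M t) ^ S p))) by (simpl; ring).
  apply Rmult_le_compat_l; [apply pow_le; lra | lra].
Qed.

Lemma Qk_bounded_succ p :
  (forall j, (2 <= j <= S (S p))%nat -> Qk_bounded M j) -> Qk_bounded M (S (S (S p))).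
Proof.
  intros IH.
  assert (Hq : cont_nonneg (qk M (S (S (S p))))).
  { apply cont_nonneg_ext
      with (fun t => sum_f_R0 (fun i => Qk M (S i) t * Qk M (S (S p - i)) t) (S p)).
    { intros; symmetry; apply qk_succ_succ. }
    apply (cont_nonneg_sum (fun i t => Qk M (S i) t * Qk M (S (S p - i)) t)).
    intros i Hi. apply cont_nonneg_mult.
    - destruct i; [apply cont_Qk_1 | apply IH; lia].
    - destruct (S p - i)%nat eqn:E; [apply cont_Qk_1 | apply IH; lia]. }
  assert (HB : forall t, 0 <= t -> has_iint (qk M (S (S (S p)))) t /\
            Rabs (iint (qk M (S (S (S p)))) t) <= 4 ^ S (S p) * A M t * sqrt (phi M t) ^ S p).
  { intros t Ht. apply has_iint_abs_le; auto. intros x Hx.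
    apply Rle_trans with (RInt (qk_majorant p) t x); [|apply RInt_qk_majorant_le; auto].
    apply RInt_le; auto;
      try (apply ex_RInt_cont_nonneg; auto using cont_qk_majorant with cont_nonneg; lra).
    intros u Hu. apply Rabs_qk_le_majorant; auto; lra. }
  unfold Qk_bounded. rewrite Qk_succ. split.
  - apply cont_nonneg_opp, cont_nonneg_iint; auto. apply HB; lra.
  - intros t Ht. rewrite Rabs_Ropp. apply HB; auto.
Qed.

Lemma Qk_bounded_all k : (2 <= k)%nat -> Qk_bounded M k.
Proof.
  intro Hk. replace k with (S (S (k - 2))) by lia. generalize (k - 2)%nat. clear k Hk.
  intro n. induction n as [n IH] using (well_founded_induction Nat.lt_wf_0).
  destruct n as [|p]; [apply Qk_bounded_2|].
  apply Qk_bounded_succ. intros j Hj.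
  replace j with (S (S (j - 2))) by lia. apply IH. lia.
Qed.
End Tail.

Theorem lemma2 (M : R -> R) (gamma T : R) :
  (* M continuous on [0, oo) *)
  (forall t, 0 <= t ->
     filterlim M (within (fun s => 0 <= s) (locally t)) (locally (M t))) ->
  0 < gamma ->
  (* (M3), first condition: |\int_t^oo M| <~ (1+t)^-gamma *)
  (forall t, 0 <= t -> has_iint M t) ->
  (exists C, forall t, 0 <= t -> Rabs (iint M t) <= C * Rpower (1 + t) (- gamma)) ->
  (* (M3), second condition *)
  (forall t, 0 <= t -> has_iint (fun s => (iint M s) ^ 2) t) ->
  (exists C, forall t, 0 <= t ->
     iint (fun s => (iint M s) ^ 2) t <= C * Rpower (1 + t) (- gamma)) ->
  (* (M3), third condition *)
  has_iint (fun t => iint (fun s => (iint M s) ^ 2) t) 0 ->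
  0 <= T ->
  (forall t, T <= t -> Qk M 2 t <= 0) /\
  (forall (k : nat) (t : R), (2 <= k)%nat -> T <= t ->
     Rabs (Qk M k t) <= 4 ^ (k - 1) * (- Qk M 2 t) * (sqrt (phi M t)) ^ (k - 2)).
Proof.
  (* Only the convergence of the integrals in (M3) is used, not their decay rates. *)
  intros HM _ HiM _ Hsq _ HA HT.
  apply cont_nonneg_of_within in HM.
  rewrite Qk_2. split.
  - intros t Ht. pose proof (A_ge0 M HM HiM Hsq t ltac:(lra)). lra.
  - intros k t Hk Ht. rewrite Ropp_involutive.
    apply (Qk_bounded_all M HM HiM Hsq HA k Hk). lra.
Qed.
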